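(* For every $\varphi \in \Lambda^2_+\mathbb{R}^8$ and all $k,l \in \{1,\dots,8\}$, \[2 \, P_+ \big( e_k \wedge (i_{e_l}\varphi) + e_l \wedge (i_{e_k}\varphi) \big) = \delta_{kl}\,\varphi,\] where $e_1,\dots,e_8$ is the standard orthonormal basis of $\mathbb{R}^8$ (identified with the dual basis via the Euclidean metric), $i_X$ denotes interior multiplication, and $P_+$ is the projection onto $\Lambda^2_+\mathbb{R}^8$ defined in the context.
   Context: Write $\mathbb{R}^8 = E \oplus E^\perp$ with orthonormal basis $e_1,\dots,e_4$ of $E$ and $e_1^\perp,\dots,e_4^\perp$ of $E^\perp$, and set $e_5=e_1^\perp, e_6=e_2^\perp, e_7=e_3^\perp, e_8=e_4^\perp$. The $4$-form $\Omega$ is $\Omega = -e_1 e_2 e_1^\perp e_2^\perp - e_1 e_2 e_3^\perp e_4^\perp - e_3 e_4 e_1^\perp e_2^\perp - e_3 e_4 e_3^\perp e_4^\perp + e_1 e_3 e_2^\perp e_4^\perp - e_1 e_3 e_1^\perp e_3^\perp - e_2 e_4 e_2^\perp e_4^\perp + e_2 e_4 e_1^\perp e_3^\perp - e_1 e_4 e_2^\perp e_3^\perp - e_1 e_4 e_1^\perp e_4^\perp - e_2 e_3 e_2^\perp e_3^\perp - e_2 e_3 e_1^\perp e_4^\perp + e_1 e_2 e_3 e_4 + e_1^\perp e_2^\perp e_3^\perp e_4^\perp$, where juxtaposition denotes wedge product. Let $*$ be the Euclidean Hodge star (orientation $e_1\wedge\dots\wedge e_4\wedge e_1^\perp\wedge\dots\wedge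 e_4^\perp$). Define $\Lambda^2_+\mathbb{R}^8 = \{\varphi: 3\varphi - *(\Omega\wedge\varphi)=0\}$ (dimension 7) and $\Lambda^2_-\mathbb{R}^8=\{\varphi: \varphi + *(\Omega\wedge\varphi)=0\}$ (dimension 21); then $\Lambda^2\mathbb{R}^8=\Lambda^2_+\oplus\Lambda^2_-$ and the projection onto $\Lambda^2_+$ is $P_+\varphi = \frac14(\varphi + *(\Omega\wedge\varphi))$. *)

(* Concrete exterior algebra of R^8 with standard basis
   e_0,...,e_7 (0-based; the paper's e_1..e_8 are e_0..e_7 here). *)
From HB Require Import structures.
From mathcomp Require Import all_boot all_order all_algebra.
Set Implicit Arguments. Unset Strict Implicit. Unset Printing Implicit Defensive.
Import Order.TTheory GRing.Theory Num.Theory.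
Local Open Scope ring_scope.

Section Ext.
Variable R : realFieldType.

(* An element of the full exterior algebra Λ R^8: coefficient of e_S
   (S = {s_1 < ... < s_p}, e_S = e_{s_1} ∧ ... ∧ e_{s_p}) for each S. *)
Local Notation form := {ffun {set 'I_8} -> R}.

Definition is_pform (p : nat) (a : form) : Prop :=
  forall S : {set 'I_8}, #|S| != p -> a S = 0.

(* sign of e_A ∧ e_B = sgn A B * e_{A ∪ B} for disjoint A B *)
Definition sgn (A B : {set 'I_8}) : R :=
  (-1) ^+ #|[set p : 'I_8 * 'I_8 | [&& p.1 \in A, p.2 \in B & (val p.2 < val p.1)%N]]|.

Definition wedge (a b : form) : form :=
  [ffun S : {set 'I_8} =>
     \sum_(A : {set 'I_8} | A \subset S) sgn A (S :\: A) * a A * b (S :\: A)].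

Definition e (i : 'I_8) : form := [ffun S : {set 'I_8} => (S == [set i])%:R].

Definition iprod (l : 'I_8) (a : form) : form :=
  [ffun T : {set 'I_8} =>
     if l \in T then 0
     else (-1) ^+ #|[set t in T | (val t < val l)%N]| * a (l |: T)].

(* Euclidean Hodge star, orientation e_0 ∧ ... ∧ e_7:
   * e_A = sgn A A^c e_{A^c} *)
Definition hodge (a : form) : form :=
  [ffun S : {set 'I_8} => sgn (~: S) S * a (~: S)].

(* paper indexing: b i = e_i for i in 1..8 *)
Definition b (i : nat) : form := e (inord i.-1).
Definition w4 (i j k l : nat) : form := wedge (wedge (wedge (b i) (b j)) (b k)) (b l).

(* e_5..e_8 = e_1^perp..e_4^perp *)
Definition Omega : form :=
  - w4 1 2 5 6 - w4 1 2 7 8 - w4 3 4 5 6 - w4 3 4 7 8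
  + w4 1 3 6 8 - w4 1 3 5 7 - w4 2 4 6 8 + w4 2 4 5 7
  - w4 1 4 6 7 - w4 1 4 5 8 - w4 2 3 6 7 - w4 2 3 5 8
  + w4 1 2 3 4 + w4 5 6 7 8.

Definition sc (c : R) (a : form) : form := [ffun S : {set 'I_8} => c * a S].

Definition in_L2plus (phi : form) : Prop :=
  is_pform 2 phi /\ sc 3%:R phi - hodge (wedge Omega phi) = 0.

Definition Pplus (phi : form) : form := sc 4%:R^-1 (phi + hodge (wedge Omega phi)).

End Ext.

From HB Require Import structures.
From Stdlib Require Import BinNums BinNat Nnat Lia.
From mathcomp Require Import all_boot all_order all_algebra.
From mathcomp Require Import ring.
Import Order.TTheory GRing.Theory Num.Theory.
Set Implicit Arguments. Unset Strict Implicit. Unset Printing Implicit Defensive.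
Local Open Scope ring_scope.

(* Omega acts by 3 on Lambda^2_+, so P_+ fixes Lambda^2_+, which is therefore
   spanned by the 28 forms P_+ e_T with |T| = 2.  Both sides of the identity
   are linear in phi, so it suffices to verify, for all k and l, the identities
     2 P_+ (e_k i_l + e_l i_k) P_+ e_T = delta_kl P_+ e_T.
   These have rational coefficients and are checked by computing with sparse
   forms, whose interpretation commutes with wedge, interior product, Hodge
   star and P_+. *)

Section Blades.
Variable R : realFieldType.
Local Notation form := {ffun {set 'I_8} -> R}.

Definition blade (A : {set 'I_8}) : form := [ffun S => (S == A)%:R].

(* [{ffun _ -> R}] is not an [lmodType R] (only [{ffun _ -> R^o}] is), so
   linearity is stated for the pointwise scaling [sc]. *)
Definition sc_linear (f : form -> form) :=
  forall c a b, f (sc c a + b) = sc c (f a) + f b.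

Lemma sc_linear0 f : sc_linear f -> f 0 = 0.
Proof.
move=> fL; apply/ffunP => S; have := congr1 (fun a : form => a S) (fL (-1) 0 0).
have -> : sc (-1) 0 + 0 = 0 :> form by apply/ffunP => T; rewrite !ffunE mulr0 addr0.
by rewrite !ffunE mulN1r addNr.
Qed.

Lemma sc_linear_sum f I (r : seq I) (P : pred I) (c : I -> R) (a : I -> form) :
  sc_linear f ->
  f (\sum_(i <- r | P i) sc (c i) (a i)) = \sum_(i <- r | P i) sc (c i) (f (a i)).
Proof.
move=> fL; elim: r => [|i r IHr]; first by rewrite !big_nil sc_linear0.
by rewrite !big_cons; case: (P i); rewrite ?fL IHr.
Qed.

Lemma blade_sum (a : form) : a = \sum_S sc (a S) (blade S).
Proof.
apply/ffunP => S; rewrite sum_ffunE (bigD1 S) //= big1 => [|T /negbTE nTS].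
  by rewrite !ffunE eqxx mulr1 addr0.
by rewrite !ffunE eq_sym nTS mulr0.
Qed.

Lemma pform_blade_sum p (a : form) : is_pform p a ->
  a = \sum_(S : {set 'I_8} | #|S| == p) sc (a S) (blade S).
Proof.
move=> ap; rewrite {1}[a]blade_sum (bigID (fun S : {set 'I_8} => #|S| == p)) /= addrC.
rewrite big1 ?add0r // => S /ap ->.
by apply/ffunP => T; rewrite !ffunE mul0r.
Qed.

Lemma wedge_linear (a : form) : sc_linear (wedge a).
Proof.
move=> c x y; apply/ffunP => S; rewrite !ffunE mulr_sumr -big_split /=.
by apply: eq_bigr => A _; rewrite !ffunE; ring.
Qed.

Lemma wedge_linearl (b : form) : sc_linear (fun a => wedge a b).
Proof.
move=> c x y; apply/ffunP => S; rewrite !ffunE mulr_sumr -big_split /=.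
by apply: eq_bigr => A _; rewrite !ffunE; ring.
Qed.

Lemma iprod_linear l : sc_linear (@iprod R l).
Proof.
by move=> c x y; apply/ffunP => T; rewrite !ffunE; case: ifP => _; ring.
Qed.

Lemma hodge_linear : sc_linear (@hodge R).
Proof. by move=> c x y; apply/ffunP => S; rewrite !ffunE; ring. Qed.

Lemma Pplus_linear : sc_linear (@Pplus R).
Proof.
move=> c x y; rewrite /Pplus wedge_linear hodge_linear.
by apply/ffunP => S; rewrite !ffunE; ring.
Qed.

Lemma Pplus_id (phi : form) : sc 3%:R phi - hodge (wedge (Omega R) phi) = 0 ->
  Pplus phi = phi.
Proof.
by rewrite /Pplus => /subr0_eq <-; apply/ffunP => S; rewrite !ffunE; field.
Qed.

Lemma wedge_blade_l A (b : form) S :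
  wedge (blade A) b S = if A \subset S then sgn R A (S :\: A) * b (S :\: A) else 0.
Proof.
rewrite ffunE; case: ifP => AS.
  rewrite (bigD1 A) //= big1 ?addr0 => [|B /andP[_ /negbTE nBA]].
    by rewrite ffunE eqxx mulr1.
  by rewrite ffunE nBA mulr0 mul0r.
rewrite big1 // => B BS; rewrite ffunE; case: eqP => [eBA|]; last by rewrite mulr0 mul0r.
by rewrite -eBA BS in AS.
Qed.

Lemma wedge_blade A B : wedge (blade A) (blade B) =
  if [disjoint A & B] then sc (sgn R A B) (blade (A :|: B)) else 0.
Proof.
apply/ffunP => S; rewrite wedge_blade_l.
have [AS|nAS] := boolP (A \subset S); last first.
  case: ifP => _; rewrite !ffunE //; case: eqP => [eS|]; last by rewrite mulr0.
  by rewrite eS subsetUl in nAS.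
have eS : S = A :|: S :\: A by rewrite -{1}(setID S A) (setIidPr AS).
have [eB|nB] := eqVneq (S :\: A) B.
  have dAB : [disjoint A & B] by rewrite -eB disjoints_subset setCD subsetUr.
  by rewrite dAB !ffunE {3}eS eB !eqxx mulr1.
case: ifP => dAB; rewrite !ffunE ?(negbTE nB) ?mulr0 //.
case: eqP => [eS'|]; rewrite ?mulr0 //.
by move: nB; rewrite eS' setDUl setDv set0U (setDidPl _) ?eqxx // disjoint_sym.
Qed.

Lemma iprod_blade l S : iprod l (blade S) =
  if l \in S then sc ((-1) ^+ #|[set t in S :\ l | (val t < val l)%N]|) (blade (S :\ l))
  else 0.
Proof.
apply/ffunP => T; have [lS|nlS] := boolP (l \in S); rewrite !ffunE; last first.
  case: ifP => // _; case: eqP => [eS|]; last by rewrite mulr0.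
  by rewrite -eS setU11 in nlS.
have [->|nT] := eqVneq T (S :\ l); first by rewrite setD11 setD1K // eqxx mulr1.
rewrite mulr0; case: ifP => // lT; case: eqP => [eS|]; rewrite ?mulr0 //.
by move: nT; rewrite -eS setU1K ?lT ?eqxx.
Qed.

Lemma hodge_blade A : hodge (blade A) = sc (sgn R A (~: A)) (blade (~: A)).
Proof.
apply/ffunP => S; rewrite !ffunE; have [->|nS] := eqVneq S (~: A).
  by rewrite setCK !eqxx.
rewrite (_ : (~: S == A) = false) ?mulr0 //.
by apply: contraNF nS => /eqP <-; rewrite setCK.
Qed.

End Blades.

Arguments blade {R} A.

(* A mask [m : N] encodes the subset [toset m] of 'I_8; bits beyond 7 are
   ignored, so masks are compared with [meq] rather than [=]. *)
Definition mbit (m : N) (i : nat) : bool := N.testbit m (N.of_nat i).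
Definition toset (m : N) : {set 'I_8} := [set i : 'I_8 | mbit m i].
Definition mset1 (i : nat) : N := N.pow 2 (N.of_nat i).
Definition msetD1 (m : N) (i : nat) : N := N.ldiff m (mset1 i).
Definition msetC (m : N) : N := N.lnot m 8.
Definition mdisjoint (m n : N) : bool :=
  all (fun i => ~~ (mbit m i && mbit n i)) (iota 0 8).
Definition meq (m n : N) : bool := all (fun i => mbit m i == mbit n i) (iota 0 8).
Definition minv (m n : N) : nat :=
  count (fun p => [&& mbit m p.1, mbit n p.2 & (p.2 < p.1)%N])
    [seq (x, y) | x <- iota 0 8, y <- iota 0 8].
Definition mbelow (m : N) (l : nat) : nat :=
  count (fun i => mbit m i && (i < l)%N) (iota 0 8).

Lemma mbit_mset1 i j : mbit (mset1 i) j = (i == j).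
Proof.
rewrite /mbit /mset1 N.pow2_bits_eqb.
by apply/idP/eqP => [/N.eqb_eq/Nat2N.inj|->] //; apply/N.eqb_eq.
Qed.

Lemma mbit_lor m n i : mbit (N.lor m n) i = mbit m i || mbit n i.
Proof. exact: N.lor_spec. Qed.

Lemma mbit_ldiff m n i : mbit (N.ldiff m n) i = mbit m i && ~~ mbit n i.
Proof. exact: N.ldiff_spec. Qed.

Lemma toset_mset1 (i : 'I_8) : toset (mset1 i) = [set i].
Proof. by apply/setP => j; rewrite !inE mbit_mset1 eq_sym. Qed.

Lemma toset_lor m n : toset (N.lor m n) = toset m :|: toset n.
Proof. by apply/setP => i; rewrite !inE mbit_lor. Qed.

Lemma toset_msetD1 m (i : 'I_8) : toset (msetD1 m i) = toset m :\ i.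
Proof. by apply/setP => j; rewrite !inE mbit_ldiff mbit_mset1 andbC eq_sym. Qed.

Lemma toset_msetC m : toset (msetC m) = ~: toset m.
Proof.
apply/setP => i; rewrite !inE /mbit /msetC N.lnot_spec_low //.
by have /ssrnat.ltP := ltn_ord i; lia.
Qed.

Lemma all_iota8 (P : pred nat) : all P (iota 0 8) = [forall i : 'I_8, P i].
Proof.
rewrite -val_enum_ord all_map.
by apply/allP/forallP => [h i|h i _]; [apply: h; rewrite mem_enum | apply: h].
Qed.

Lemma count_iota8 (P : pred nat) : count P (iota 0 8) = #|[set i : 'I_8 | P i]|.
Proof.
by rewrite -sum1_count -sum1dep_card -[iota 0 8]/(index_iota 0 8) big_mkord.
Qed.

Lemma count_iota8_pairs (P : rel nat) :
  count (fun p => P p.1 p.2) [seq (x, y) | x <- iota 0 8, y <- iota 0 8] =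
  #|[set p : 'I_8 * 'I_8 | P p.1 p.2]|.
Proof.
rewrite -sum1_count -sum1dep_card big_mkcond big_allpairs.
rewrite -[iota 0 8]/(index_iota 0 8) big_mkord (eq_bigr _ (fun i _ => big_mkord _ _)) /=.
by rewrite pair_bigA -big_mkcond.
Qed.

Lemma disjoint_toset m n : [disjoint toset m & toset n] = mdisjoint m n.
Proof.
rewrite /mdisjoint all_iota8 disjoint_subset; apply/subsetP/forallP => /= [h i|h i].
  by apply/negP => /andP[mi ni]; have := h i; rewrite !inE mi ni => /(_ isT).
by rewrite !inE => mi; have := h i; rewrite mi.
Qed.

Lemma meq_toset m n : meq m n -> toset m = toset n.
Proof.
by rewrite /meq all_iota8 => /forallP h; apply/setP => i; rewrite !inE (eqP (h i)).
Qed.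

Lemma sgn_toset (R : realFieldType) m n : sgn R (toset m) (toset n) = (-1) ^+ minv m n.
Proof.
rewrite /sgn /minv (count_iota8_pairs (fun x y => [&& mbit m x, mbit n y & (y < x)%N])).
by congr (_ ^+ _); apply: eq_card => p; rewrite !inE.
Qed.

Lemma card_below_toset m (l : 'I_8) :
  #|[set t in toset m | (val t < val l)%N]| = mbelow m l.
Proof. by rewrite /mbelow count_iota8; apply: eq_card => t; rewrite !inE. Qed.

(* A sparse form [[:: (c_1, m_1); ...]] stands for the sum of the
   [c_i e_(toset m_i)], see [sinterp]; masks may repeat. *)
Definition sform := seq (rat * N).

Definition sblade (m : N) : sform := [:: (1, m)].
Definition sscale (c : rat) (L : sform) : sform := [seq (c * p.1, p.2) | p <- L].
Definition sextend (f : N -> sform) (L : sform) : sform :=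
  flatten [seq sscale p.1 (f p.2) | p <- L].

Definition swedge (L M : sform) : sform :=
  sextend (fun m => sextend (fun n =>
    if mdisjoint m n then [:: ((-1) ^+ minv m n, N.lor m n)] else [::]) M) L.
Definition siprod (l : nat) : sform -> sform :=
  sextend (fun m =>
    if mbit m l then [:: ((-1) ^+ mbelow (msetD1 m l) l, msetD1 m l)] else [::]).
Definition shodge : sform -> sform :=
  sextend (fun m => [:: ((-1) ^+ minv m (msetC m), msetC m)]).

Definition sbasis (i : nat) : sform := sblade (mset1 i.-1).
Definition sw4 (i j k l : nat) : sform :=
  swedge (swedge (swedge (sbasis i) (sbasis j)) (sbasis k)) (sbasis l).
(* Parenthesised like [Omega], so that its interpretation is [Omega] verbatim. *)
Definition somega : sform :=
  ((((((((((((sscale (-1) (sw4 1 2 5 6) ++ sscale (-1) (sw4 1 2 7 8))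
  ++ sscale (-1) (sw4 3 4 5 6)) ++ sscale (-1) (sw4 3 4 7 8)) ++ sw4 1 3 6 8)
  ++ sscale (-1) (sw4 1 3 5 7)) ++ sscale (-1) (sw4 2 4 6 8)) ++ sw4 2 4 5 7)
  ++ sscale (-1) (sw4 1 4 6 7)) ++ sscale (-1) (sw4 1 4 5 8))
  ++ sscale (-1) (sw4 2 3 6 7)) ++ sscale (-1) (sw4 2 3 5 8)) ++ sw4 1 2 3 4)
  ++ sw4 5 6 7 8.
Definition sPplus (L : sform) : sform := sscale 4%:R^-1 (L ++ shodge (swedge somega L)).

Fixpoint sadd_term (p : rat * N) (L : sform) : sform :=
  if L is q :: L' then
    if meq p.2 q.2 then (p.1 + q.1, q.2) :: L' else q :: sadd_term p L'
  else [:: p].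
Definition snorm (L : sform) : sform := foldr sadd_term [::] L.
Definition svanishes (L : sform) : bool := all (fun p => p.1 == 0) (snorm L).

Section Interpretation.
Variable R : realFieldType.
Local Notation form := {ffun {set 'I_8} -> R}.

Definition sinterp (L : sform) : form := \sum_(p <- L) sc (ratr p.1) (blade (toset p.2)).

Lemma sc_linear_sc c : sc_linear (@sc R c).
Proof. by move=> d a x; apply/ffunP => S; rewrite !ffunE; ring. Qed.

Lemma scN1 (a : form) : sc (-1) a = - a.
Proof. by apply/ffunP => S; rewrite !ffunE mulN1r. Qed.

Lemma sinterp_cons p L :
  sinterp (p :: L) = sc (ratr p.1) (blade (toset p.2)) + sinterp L.
Proof. exact: big_cons. Qed.

Lemma sinterp_cat L M : sinterp (L ++ M) = sinterp L + sinterp M.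
Proof. exact: big_cat. Qed.

Lemma sinterp_flatten (Ls : seq sform) : sinterp (flatten Ls) = \sum_(L <- Ls) sinterp L.
Proof. exact: big_flatten. Qed.

Lemma sinterp_blade m : sinterp (sblade m) = blade (toset m).
Proof. by rewrite /sinterp big_seq1 rmorph1; apply/ffunP => S; rewrite !ffunE mul1r. Qed.

Lemma sinterp_scale c L : sinterp (sscale c L) = sc (ratr c) (sinterp L).
Proof.
rewrite /sinterp big_map sc_linear_sum; last exact: sc_linear_sc.
by apply: eq_bigr => p _; apply/ffunP => S; rewrite !ffunE rmorphM; ring.
Qed.

Lemma sinterp_extend (f : form -> form) (g : N -> sform) L :
  sc_linear f -> (forall m, f (blade (toset m)) = sinterp (g m)) ->
  f (sinterp L) = sinterp (sextend g L).
Proof.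
move=> fL fg; rewrite /sextend sinterp_flatten big_map {1}/sinterp sc_linear_sum //.
by apply: eq_bigr => p _; rewrite fg sinterp_scale.
Qed.

Lemma sinterp_wedge L M : sinterp (swedge L M) = wedge (sinterp L) (sinterp M).
Proof.
symmetry; apply: sinterp_extend (fun a => wedge a (sinterp M)) _ _ _ _.
  exact: wedge_linearl.
move=> m; apply: sinterp_extend; first exact: wedge_linear.
move=> n; rewrite wedge_blade disjoint_toset.
case: ifP => _; last by rewrite /sinterp big_nil.
by rewrite sinterp_cons /sinterp big_nil addr0 rmorph_sign sgn_toset toset_lor.
Qed.

Lemma sinterp_iprod (l : 'I_8) L : sinterp (siprod l L) = iprod l (sinterp L).
Proof.
symmetry; apply: sinterp_extend; first exact: iprod_linear.
move=> m; rewrite iprod_blade inE -toset_msetD1 card_below_toset.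
case: ifP => _; last by rewrite /sinterp big_nil.
by rewrite sinterp_cons /sinterp big_nil addr0 rmorph_sign.
Qed.

Lemma sinterp_hodge L : sinterp (shodge L) = hodge (sinterp L).
Proof.
symmetry; apply: sinterp_extend; first exact: hodge_linear.
move=> m; rewrite hodge_blade sinterp_cons /sinterp big_nil addr0 rmorph_sign.
by rewrite -toset_msetC sgn_toset.
Qed.

Lemma sinterp_basis i : (i.-1 < 8)%N -> sinterp (sbasis i) = b R i.
Proof.
move=> ilt; rewrite sinterp_blade -[i.-1](@inordK 7) // toset_mset1.
by apply/ffunP => S; rewrite !ffunE.
Qed.

Lemma sinterp_neg L : sinterp (sscale (-1) L) = - sinterp L.
Proof. by rewrite sinterp_scale rmorphN1 scN1. Qed.

Lemma sinterp_omega : sinterp somega = Omega R.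
Proof.
(* Without the lock, [sinterp_cat] would match inside the unfolded [sw4]. *)
rewrite /somega [sw4]lock !sinterp_cat !sinterp_neg -lock.
by rewrite /sw4 !sinterp_wedge !sinterp_basis.
Qed.

Lemma sinterp_Pplus L : sinterp (sPplus L) = Pplus (sinterp L).
Proof.
rewrite sinterp_scale sinterp_cat sinterp_hodge sinterp_wedge sinterp_omega.
by rewrite fmorphV rmorph_nat.
Qed.

Lemma sinterp_add_term p L : sinterp (sadd_term p L) = sinterp (p :: L).
Proof.
elim: L => [|q L IHL] //=; case: ifP => [/meq_toset eqpq|_].
  rewrite !sinterp_cons eqpq addrA; congr (_ + _).
  by apply/ffunP => S; rewrite !ffunE rmorphD mulrDl.
by rewrite !sinterp_cons IHL sinterp_cons addrCA.
Qed.

Lemma sinterp_norm L : sinterp (snorm L) = sinterp L.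
Proof.
by elim: L => [|p L IHL] //=; rewrite sinterp_add_term !sinterp_cons IHL.
Qed.

Lemma sinterp_vanishes L : svanishes L -> sinterp L = 0.
Proof.
move=> /allP L0; rewrite -sinterp_norm /sinterp big1_seq // => p /andP[_ /L0 /eqP ->].
by apply/ffunP => S; rewrite !ffunE rmorph0 mul0r.
Qed.

End Interpretation.

Definition ssym (k l : nat) (L : sform) : sform :=
  swedge (sblade (mset1 k)) (siprod l L) ++ swedge (sblade (mset1 l)) (siprod k L).

Definition sym_identity (k l : nat) (m : N) : bool :=
  let P := sPplus (sblade m) in
  svanishes (sscale 2%:R (sPplus (ssym k l P)) ++ sscale (- (k == l)%:R) P).

Lemma sym_identity_all : all (fun k => all (fun l => all (fun i => all (fun j =>
  (i < j)%N ==> sym_identity k l (N.lor (mset1 i) (mset1 j)))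
  (iota 0 8)) (iota 0 8)) (iota 0 8)) (iota 0 8).
Proof. by vm_compute. Qed.

Section SymmetricAction.
Variable R : realFieldType.
Local Notation form := {ffun {set 'I_8} -> R}.

Definition sym_action (k l : 'I_8) (a : form) : form :=
  wedge (e R k) (iprod l a) + wedge (e R l) (iprod k a).

Lemma sym_action_linear k l : sc_linear (sym_action k l).
Proof.
move=> c a x; rewrite /sym_action !iprod_linear !wedge_linear.
by apply/ffunP => S; rewrite !ffunE; ring.
Qed.

Lemma sinterp_sym (k l : 'I_8) L : sinterp R (ssym k l L) = sym_action k l (sinterp R L).
Proof.
by rewrite sinterp_cat !sinterp_wedge !sinterp_iprod !sinterp_blade !toset_mset1.
Qed.

Lemma sym_action_Pplus_blade (k l : 'I_8) (T : {set 'I_8}) : #|T| == 2 ->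
  sc 2%:R (Pplus (sym_action k l (Pplus (blade T)))) = sc (k == l)%:R (Pplus (blade T)).
Proof.
case/cards2P => i [j [nij ->]].
wlog ltij : i j nij / (i < j)%N.
  move=> hwlog; case: (ltngtP i j) => [|ji|/val_inj/eqP]; first exact: hwlog.
    by rewrite setUC; apply: hwlog; rewrite // eq_sym.
  by rewrite (negbTE nij).
have := sym_identity_all; rewrite all_iota8 => /forallP/(_ k).
rewrite all_iota8 => /forallP/(_ l); rewrite all_iota8 => /forallP/(_ i).
rewrite all_iota8 => /forallP/(_ j)/implyP/(_ ltij)/(sinterp_vanishes R).
(* [sPplus] is itself an [sscale]: only the outer scalings are expanded. *)
rewrite sinterp_cat !(sinterp_scale _ _ (sPplus _)) !sinterp_Pplus.
rewrite sinterp_sym sinterp_Pplus sinterp_blade.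
rewrite toset_lor !toset_mset1 rmorphN !rmorph_nat => /eqP; rewrite addr_eq0 => /eqP ->.
by apply/ffunP => S; rewrite !ffunE mulNr opprK.
Qed.

End SymmetricAction.

Theorem lemma2p1 (R : realFieldType) (phi : {ffun {set 'I_8} -> R}) :
  in_L2plus phi ->
  forall k l : 'I_8,
    sc 2%:R (Pplus (wedge (e R k) (iprod l phi) + wedge (e R l) (iprod k phi)))
    = sc (k == l)%:R phi.
Proof.
move=> [phi2 phi_plus] k l.
have phiE : phi = \sum_(T : {set 'I_8} | #|T| == 2) sc (phi T) (Pplus (blade T)).
  rewrite -{1}(Pplus_id phi_plus) {1}(pform_blade_sum phi2).
  exact/sc_linear_sum/Pplus_linear.
rewrite -/(sym_action k l phi) phiE.
rewrite sc_linear_sum; last exact: sym_action_linear.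
rewrite sc_linear_sum; last exact: Pplus_linear.
rewrite !sc_linear_sum; try exact: sc_linear_sc.
by apply: eq_bigr => T hT; rewrite sym_action_Pplus_blade.
Qed.
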